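(* If $v,w\in\mathfrak{H}$ are words in $x,y$ that are cyclically equivalent (one is obtained from the other by a cyclic permutation of its letters), then $\rho_{1,t}^{(\hbar)}(v)=\rho_{1,t}^{(\hbar)}(w)$.
   Context: Let $\hbar,t$ be formal variables and $\mathfrak{H}=\mathbb{Q}[\hbar,t]\langle x,y\rangle$. Let $\gamma_\hbar^t$ be the algebra automorphism of $\mathfrak{H}$ with $\gamma_\hbar^t(x)=x$, $\gamma_\hbar^t(y)=tx+y+\hbar t$. Make $\mathfrak{H}\otimes\mathfrak{H}$ (over $\mathbb{Q}[\hbar,t]$) an $\mathfrak{H}$-bimodule by $a\diamond(w_1\otimes w_2)=w_1\otimes aw_2$ and $(w_1\otimes w_2)\diamond b=w_1b\otimes w_2$. Let $\mathcal C_{1,t}^{(\hbar)}:\mathfrak{H}\to\mathfrak{H}\otimes\mathfrak{H}$ be the $\mathbb{Q}[\hbar,t]$-linear map with $\mathcal C_{1,t}^{(\hbar)}(x)=-\mathcal C_{1,t}^{(\hbar)}(y)=x\otimes y$ and $\mathcal C_{1,t}^{(\hbar)}(vw)=\mathcal C_{1,t}^{(\hbar)}(v)\diamond(\gamma_\hbar^t)^{-1}(w)+(\gamma_\hbar^t)^{-1}(v)\diamond\mathcal C_{1,t}^{(\hbar)}(w)$. Let $\rho_{1,t}^{(\hbar)}=M_1\circ\mathcal C_{1,t}^{(\hbar)}$ where $M_1(w_1\otimes w_2)=w_1w_2$. *)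

From HB Require Import structures.
From mathcomp Require Import all_boot all_order all_algebra.
Set Implicit Arguments. Unset Strict Implicit. Unset Printing Implicit Defensive.
Import GRing.Theory.
Local Open Scope ring_scope.

(* Coefficient ring Q[hbar, t], realised as Q[t][hbar]. *)
Definition coef : comNzRingType := {poly {poly rat}}.
Definition hbar : coef := 'X.
Definition tt_ : coef := ('X : {poly rat})%:P.

Definition letter := bool.
Definition lx : letter := false.
Definition ly : letter := true.
Definition word := seq letter.

(* H = Q[hbar,t]<x,y>, represented by coefficient functions on words
   (only finitely supported ones occur). *)
Definition H := word -> coef.
Definition hzero : H := fun _ => 0.
Definition hadd (f g : H) : H := fun w => f w + g w.
Definition hopp (f : H) : H := fun w => - f w.
Definition hscale (c : coef) (f : H) : H := fun w => c * f w.
Definition hmul (f g : H) : H :=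
  fun w => \sum_(i < (size w).+1) f (take i w) * g (drop i w).
Definition hword (u : word) : H := fun w => (w == u)%:R.
Definition hone : H := hword [::].

(* gamma^{-1}: the inverse of the automorphism gamma(x)=x, gamma(y)=tx+y+hbar t,
   i.e. gamma^{-1}(x)=x, gamma^{-1}(y) = y - t x - hbar t. *)
Definition ginv_letter (a : letter) : H :=
  if a then hadd (hword [:: ly])
             (hopp (hadd (hscale tt_ (hword [:: lx])) (hscale (hbar * tt_) hone)))
  else hword [:: lx].
Fixpoint ginv (w : word) : H :=
  match w with
  | [::] => hone
  | a :: w' => hmul (ginv_letter a) (ginv w')
  end.

(* H (x) H over Q[hbar,t], represented by coefficient functions on pairs of
   words (basis u1 (x) u2). *)
Definition HH := word -> word -> coef.
Definition tzero : HH := fun _ _ => 0.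
Definition tadd (m n : HH) : HH := fun u1 u2 => m u1 u2 + n u1 u2.
Definition topp (m : HH) : HH := fun u1 u2 => - m u1 u2.
Definition tens (p q : H) : HH := fun u1 u2 => p u1 * q u2.
(* bimodule structure: a <> (w1 (x) w2) = w1 (x) a w2 *)
Definition tleft (a : H) (m : HH) : HH :=
  fun u1 u2 => \sum_(i < (size u2).+1) a (take i u2) * m u1 (drop i u2).
(* (w1 (x) w2) <> b = w1 b (x) w2 *)
Definition tright (m : HH) (b : H) : HH :=
  fun u1 u2 => \sum_(i < (size u1).+1) m (take i u1) u2 * b (drop i u1).
Definition M1 (m : HH) : H :=
  fun w => \sum_(i < (size w).+1) m (take i w) (drop i w).

Definition C_letter (a : letter) : HH :=
  if a then topp (tens (hword [:: lx]) (hword [:: ly]))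
  else tens (hword [:: lx]) (hword [:: ly]).
(* C on the word basis, via C(a w) = C(a) <> gamma^{-1}(w) + gamma^{-1}(a) <> C(w)
   (the unique twisted derivation with the given values on generators; C(1)=0). *)
Fixpoint C1t (w : word) : HH :=
  match w with
  | [::] => tzero
  | a :: w' => tadd (tright (C_letter a) (ginv w')) (tleft (ginv_letter a) (C1t w'))
  end.

Definition rho1t (w : word) : H := M1 (C1t w).

(** Unfolding the twisted-derivation recursion gives
    C(w) = sum_k sign(w_k) x ginv(w_{>k}) (x) ginv(w_{<k}) y, so, since ginv is
    multiplicative, rho(w) = sum_k sign(w_k) x ginv(w_{>k} w_{<k}) y.  The k-th
    summand depends only on the k-th rotation w_k w_{>k} w_{<k} of w, hence
    rho(w) is a sum over all rotations of w, which is invariant under rotating w. *)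

From mathcomp Require Import all_boot all_order all_algebra.
From mathcomp Require Import ring.
From Stdlib Require Import FunctionalExtensionality.
Import GRing.Theory.
Local Open Scope ring_scope.

Lemma big_rot1 {T R : Type} {idx : R} (op : Monoid.com_law idx)
    (F : seq T -> R) (s : seq T) :
  \big[op/idx]_(k < size s) F (rot k (rot 1 s)) =
  \big[op/idx]_(k < size s) F (rot k s).
Proof.
case: s => [|a s]; first by rewrite !big_ord0.
have rotS1 (k : 'I_(size (a :: s))) : rot k (rot 1 (a :: s)) = rot k.+1 (a :: s).
  by rewrite -rotD addn1.
under eq_bigr => k _ do rewrite rotS1.
rewrite big_ord_recr big_ord_recl /= rot0.
by rewrite (rot_size (a :: s)) Monoid.mulmC.
Qed.

Lemma big_rot {T R : Type} {idx : R} (op : Monoid.com_law idx)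
    (F : seq T -> R) (s : seq T) (n : nat) :
  \big[op/idx]_(k < size s) F (rot k (rot n s)) =
  \big[op/idx]_(k < size s) F (rot k s).
Proof.
elim: n => [|n IHn]; first by rewrite rot0.
have [lt_n_s | le_s_n] := ltnP n (size s).
  by rewrite rotS //; have := big_rot1 op F (rot n s); rewrite size_rot => ->.
by rewrite rot_oversize // ltnW.
Qed.

Definition hshift (f : H) (a : letter) : H := fun s => f (a :: s).

Lemma hmul_nil (f g : H) : hmul f g [::] = f [::] * g [::].
Proof. by rewrite /hmul big_ord_recl big_ord0 addr0. Qed.

Lemma hmul_cons (f g : H) (a : letter) (u : word) :
  hmul f g (a :: u) = f [::] * g (a :: u) + hmul (hshift f a) g u.
Proof. by rewrite /hmul big_ord_recl. Qed.

Lemma hmul_linl (c : coef) (p q h : H) (u : word) :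
  hmul (fun s => c * p s + q s) h u = c * hmul p h u + hmul q h u.
Proof. by rewrite /hmul mulr_sumr -big_split /=; apply: eq_bigr => i _; ring. Qed.

Lemma hmulA_at (u : word) (f g h : H) :
  hmul f (hmul g h) u = hmul (hmul f g) h u.
Proof.
elim: u f g h => [|a u IHu] f g h; first by rewrite !hmul_nil mulrA.
have shift_hmul : hshift (hmul f g) a =
    fun s => f [::] * hshift g a s + hmul (hshift f a) g s.
  by apply: functional_extensionality => s; rewrite /hshift hmul_cons.
by rewrite !hmul_cons IHu hmul_nil shift_hmul hmul_linl; ring.
Qed.

Lemma hmulA : associative hmul.
Proof. by move=> f g h; apply: functional_extensionality => u; apply: hmulA_at. Qed.

Lemma hmul1l : left_id hone hmul.
Proof.
move=> f; apply: functional_extensionality => -[|a u].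
  by rewrite hmul_nil /hone /hword mul1r.
rewrite hmul_cons /hone /hword /= mul1r /hmul big1 ?addr0 // => i _.
by rewrite /hshift mul0r.
Qed.

Lemma ginv_cat (s t : word) : ginv (s ++ t) = hmul (ginv s) (ginv t).
Proof.
elim: s => [|a s IHs] /=; first by rewrite hmul1l.
by rewrite IHs hmulA.
Qed.

Definition sign (a : letter) : coef := if a then -1 else 1.

Definition xg (s : word) : H := hmul (hword [:: lx]) (ginv s).
Definition gy (s : word) : H := hmul (ginv s) (hword [:: ly]).
Definition xgy (s : word) : H := hmul (hword [:: lx]) (gy s).

Lemma hmul_xg_gy (s t : word) : hmul (xg s) (gy t) = xgy (s ++ t).
Proof. by rewrite /xgy /xg /gy ginv_cat !hmulA. Qed.

Lemma C_letterE (a : letter) (u1 u2 : word) :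
  C_letter a u1 u2 = sign a * (hword [:: lx] u1 * hword [:: ly] u2).
Proof. by case: a; rewrite /C_letter /sign /topp /tens ?mulN1r ?mul1r. Qed.

Lemma tright_C_letter (a : letter) (b : H) (u1 u2 : word) :
  tright (C_letter a) b u1 u2 =
  sign a * (hmul (hword [:: lx]) b u1 * hword [:: ly] u2).
Proof.
rewrite /tright /hmul mulr_suml mulr_sumr.
by apply: eq_bigr => i _; rewrite C_letterE; ring.
Qed.

Lemma tleft_sum (g : H) {m : HH} {n : nat} {c : 'I_n -> coef} {p q : 'I_n -> H} :
  (forall v1 v2, m v1 v2 = \sum_(k < n) c k * (p k v1 * q k v2)) ->
  forall u1 u2, tleft g m u1 u2 = \sum_(k < n) c k * (p k u1 * hmul g (q k) u2).
Proof.
move=> mE u1 u2; rewrite /tleft /hmul.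
under eq_bigr => i _ do rewrite mE mulr_sumr.
rewrite exchange_big; apply: eq_bigr => k _ /=.
by rewrite !mulr_sumr; apply: eq_bigr => i _; ring.
Qed.

Lemma C1t_expand (w u1 u2 : word) :
  C1t w u1 u2 =
  \sum_(k < size w) sign (nth lx w k) * (xg (drop k.+1 w) u1 * gy (take k w) u2).
Proof.
elim: w u1 u2 => [|a w IHw] u1 u2; first by rewrite big_ord0.
rewrite /= /tadd tright_C_letter (tleft_sum _ IHw) big_ord_recl /=.
rewrite drop0 /gy /= hmul1l; congr (_ + _).
by apply: eq_bigr => k _; rewrite hmulA.
Qed.

Definition rot_term (s : word) : H :=
  if s is a :: s' then fun u => sign a * xgy s' u else hzero.

Lemma rho1t_sum_rot (w u : word) :
  rho1t w u = \sum_(k < size w) rot_term (rot k w) u.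
Proof.
rewrite /rho1t /M1; under eq_bigr => i _ do rewrite C1t_expand.
rewrite exchange_big; apply: eq_bigr => k _ /=.
rewrite /rot (drop_nth lx (ltn_ord k)) /= -hmul_xg_gy.
by rewrite /hmul mulr_sumr.
Qed.

Theorem proposition3p3 (v w : word) :
  (exists n : nat, w = rot n v) -> rho1t v = rho1t w.
Proof.
move=> [n ->]; apply: functional_extensionality => u.
by rewrite !rho1t_sum_rot size_rot (big_rot _ (rot_term^~ u)).
Qed.
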